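(* Let $\mathbb K\in\{\mathbb R,\mathbb C\}$ and fix a family of Taylor sheaves $\mathcal F^V$ (one for each finite-dimensional $\mathbb K$-linear space $V$). For all prevarieties $M,N\in\widehat{\mathcal V}$, there exists a $\widehat{\mathcal V}$-product structure on $M\times N$.
   Context: A space with a sheaf of $\mathbb K$-valued functions is a topological space $M$ together with, for each open $U\subset M$, a $\mathbb K$-algebra $\mathcal F(U)$ of functions $U\to\mathbb K$ (containing the constants, with pointwise operations) such that: if $W\subset U$ are open and $f\in\mathcal F(U)$ then $f|_W\in\mathcal F(W)$; and if $U=\bigcup_i U_i$ with $U_i$ open and $f:U\to\mathbb K$ satisfies $f|_{U_i}\in\mathcal F(U_i)$ for all $i$, then $f\in\mathcal F(U)$. The germ of $f$ at $p$ and the stalk $\mathcal F_p$ (a $\mathbb K$-algebra of germs) are defined as usual; $\mathfrak m_p\subset\mathcal F_p$ is the ideal of germs vanishing at $p$. The sheaf is local if every germ in $\mathcal F_p\setminus\mathfrak m_p$ is invertible in $\mathcal F_p$, for all $p$. A continuous map $\psi:(M_1,\mathcal F_1)\to(M_2,\mathcal F_2)$ is smooth if $f\circ\psi\in\mathcal F_1(\psi^{-1}(U))$ for all open $U\subset M_2$ and $f\in\mathcal F_2(U)$. For a subset $S\subset M$, the induced structure on $S$ is the subspace topology together with the sheaf of functions on open subsets of $S$ which are locally restrictions of functions in $\mathcal F$. Taylor sheaves: every finite-dimensional $\mathbb K$-linear space $V$ is equipped with a topology and a local sheaf $\mathcal F^V$ of $\mathbb K$-valued functions such that: (1) the topology on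 $V$ is the weakest one making all functions in $\mathcal F^V(V)$ continuous; (2) $V^*\subset\mathcal F^V(V)$; (3) for finite-dimensional $V,W$ and open $U\subset V$ (with induced structure), a map $\psi:U\to W$ is smooth iff $\varphi\circ\psi\in\mathcal F^V(U)$ for all $\varphi\in W^*$; (4) for each $p\in V$, the composition $V^*\to\mathfrak m_p\to\mathfrak m_p/\mathfrak m_p^2$, $\varphi\mapsto(\varphi-\varphi(p))_p \bmod \mathfrak m_p^2$, is a $\mathbb K$-linear isomorphism (so for $f\in\mathcal F^V(U)$, $p\in U$, there is a unique $\varphi\in V^*$ with $f_p-f(p)-(\varphi-\varphi(p))_p\in\mathfrak m_p^2$; write $df_p:=\varphi$); (5) for open $U\subset V$ and $f\in\mathcal F^V(U)$, the function $d'f:U\times V\to\mathbb K$, $(p,v)\mapsto df_p(v)$, belongs to $\mathcal F^{V\oplus V}(U\times V)$ (here $U\times V$ is open in $V\oplus V$). A prevariety is a space with a sheaf of $\mathbb K$-valued functions $M$ admitting a countable or finite open cover by open sets each of which, with the induced structure, is isomorphic (via a smooth map with smooth inverse) to a locally closed subset of some finite-dimensional $\mathbb K$-linear space $V$ endowed with the structure induced from $(V,\mathcal F^V)$. $\widehat{\mathcal V}$ denotes the class of prevarieties. For $M_1,M_2\in\widehat{\mathcal V}$, a $\widehat{\mathcal V}$-product structure on the set $M_1\times M_2$ is a topology and sheaf making $M_1\times M_2$ a prevariety such that the projections $\pi_i:M_1\times M_2\to M_i$ are smooth and, for every $M\in\widehat{\mathcal V}$ and smooth maps $\psi_i:M\to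 M_i$ ($i=1,2$), the map $\psi=(\psi_1,\psi_2):M\to M_1\times M_2$ is smooth. *)

From HB Require Import structures.
From mathcomp Require Import all_boot all_order all_algebra.
From mathcomp Require Import boolp classical_sets cardinality reals.
From mathcomp Require Import complex.
Set Implicit Arguments. Unset Strict Implicit. Unset Printing Implicit Defensive.
Import Order.TTheory GRing.Theory Num.Theory.
Local Open Scope classical_set_scope.
Local Open Scope ring_scope.

(* The base field K in {R, C}: [Kfield R true] is the reals, [Kfield R false]
   the complex numbers R[i], for a model R of the real numbers. *)
Definition Kfield (R : realType) (b : bool) : numFieldType :=
  if b then (R : numFieldType) else ((R[i])%C : numFieldType).

Section SpacesWithSheaves.
Variable K : numFieldType.

Definition Kopen (O : set K) : Prop :=
  forall x, O x -> exists2 e : K, 0 < e & forall y, `|y - x| < e -> O y.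

Definition is_topology (T : Type) (op : set (set T)) : Prop :=
  [/\ op setT, op set0,
      (forall A B, op A -> op B -> op (A `&` B)) &
      (forall (I : Type) (A : I -> set T), (forall i, op (A i)) -> op (\bigcup_i A i))].

Definition generated_topology (T : Type) (S : set (set T)) : set (set T) :=
  fun A => forall op, is_topology op -> S `<=` op -> op A.

(* Functions on U are represented by total functions T -> K, only their
   values on U matter (the sheaf axioms below force this). *)
Record sfstr (T : Type) := SFStr {
  sopen : set (set T);
  sfun  : set T -> set (T -> K) }.

Definition is_sfspace (T : Type) (s : sfstr T) : Prop :=
  [/\ is_topology (sopen s),
      (forall U, sopen s U ->
         [/\ forall c : K, sfun s U (fun _ => c),
             forall f g, sfun s U f -> sfun s U g -> sfun s U (fun x => f x + g x),
             forall f g, sfun s U f -> sfun s U g -> sfun s U (fun x => f x * g x) &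
             forall (a : K) f, sfun s U f -> sfun s U (fun x => a * f x)]),
      (forall U W f, sopen s U -> sopen s W -> W `<=` U -> sfun s U f -> sfun s W f) &
      (forall U (I : Type) (Ui : I -> set T) (f : T -> K),
         sopen s U -> (forall i, sopen s (Ui i)) -> U = \bigcup_i Ui i ->
         (forall i, exists2 g, sfun s (Ui i) g & forall x, Ui i x -> f x = g x) ->
         sfun s U f)].

Definition germ_at (T : Type) (s : sfstr T) (p : T) (f : T -> K) : Prop :=
  exists U, [/\ sopen s U, U p & sfun s U f].

Definition is_local (T : Type) (s : sfstr T) : Prop :=
  forall p U f, sopen s U -> U p -> sfun s U f -> f p != 0 ->
    exists W g, [/\ sopen s W, W p, W `<=` U, sfun s W g &
                    forall x, W x -> f x * g x = 1].

Definition in_mp2 (T : Type) (s : sfstr T) (p : T) (h : T -> K) : Prop :=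
  exists W (n : nat) (a b : 'I_n -> T -> K),
    [/\ sopen s W, W p,
        forall i, [/\ sfun s W (a i), sfun s W (b i), a i p = 0 & b i p = 0] &
        forall x, W x -> h x = \sum_(i < n) a i x * b i x].

Definition smooth (T1 T2 : Type) (s1 : sfstr T1) (s2 : sfstr T2) (psi : T1 -> T2) : Prop :=
  (forall B, sopen s2 B -> sopen s1 (psi @^-1` B)) /\
  (forall B f, sopen s2 B -> sfun s2 B f -> sfun s1 (psi @^-1` B) (f \o psi)).

Definition sf_iso (T1 T2 : Type) (s1 : sfstr T1) (s2 : sfstr T2) : Prop :=
  exists (psi : T1 -> T2) (chi : T2 -> T1),
    [/\ smooth s1 s2 psi, smooth s2 s1 chi, cancel psi chi & cancel chi psi].

Definition induced (T : Type) (s : sfstr T) (S : set T) : sfstr {x : T | S x} :=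
  @SFStr {x : T | S x}
    (fun A => exists2 B, sopen s B & A = (@proj1_sig T S) @^-1` B)
    (fun A f => (exists2 B, sopen s B & A = (@proj1_sig T S) @^-1` B) /\
       forall p, A p -> exists W B g,
         [/\ (exists2 B', sopen s B' & W = (@proj1_sig T S) @^-1` B'),
             W p, W `<=` A, sopen s B /\ sfun s B g &
             forall x, W x -> B (proj1_sig x) /\ f x = g (proj1_sig x)]).

Definition closed_in (T : Type) (s : sfstr T) (C : set T) : Prop := sopen s (~` C).

Definition locally_closed (T : Type) (s : sfstr T) (S : set T) : Prop :=
  exists A C, [/\ sopen s A, closed_in s C & S = A `&` C].

End SpacesWithSheaves.

Definition lin_functional (K : numFieldType) (V : vectType K) (phi : V -> K) : Prop :=
  forall (a : K) (u v : V), phi (a *: u + v) = a * phi u + phi v.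

Definition taylor_family (K : numFieldType) := forall V : vectType K, sfstr K V.

Definition is_taylor_family (K : numFieldType) (TF : taylor_family K) : Prop :=
  forall V : vectType K,
  (is_sfspace (TF V) /\ is_local (TF V)) /\
  [/\
      sopen (TF V) = generated_topology
        (fun A => exists f O, [/\ sfun (TF V) setT f, Kopen O & A = f @^-1` O]),
      (forall phi, lin_functional phi -> sfun (TF V) setT phi),
      (forall (W : vectType K) (U : set V) (psi : {x : V | U x} -> W),
         sopen (TF V) U ->
         (smooth (induced (TF V) U) (TF W) psi <->
          forall phi : W -> K, lin_functional phi ->
            sfun (induced (TF V) U) setT (phi \o psi))),
      (* (4) V^* -> m_p / m_p^2, phi |-> (phi - phi(p))_p, is a bijection
             (it is K-linear by construction) *)
      (forall p : V,
         (forall phi1 phi2, lin_functional phi1 -> lin_functional phi2 ->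
            in_mp2 (TF V) p (fun x => (phi1 x - phi1 p) - (phi2 x - phi2 p)) ->
            phi1 = phi2) /\
         (forall h, germ_at (TF V) p h -> h p = 0 ->
            exists2 phi, lin_functional phi &
              in_mp2 (TF V) p (fun x => h x - (phi x - phi p)))) &
      (* (5) d'f (p, v) = df_p(v) belongs to F^{V (+) V}(U x V) *)
      (forall (U : set V) (f : V -> K) (D : V -> V -> K),
         sopen (TF V) U -> sfun (TF V) U f ->
         (forall p, U p -> lin_functional (D p) /\
            in_mp2 (TF V) p (fun x => f x - f p - (D p x - D p p))) ->
         sfun (TF (V * V)%type) (U `*` setT) (fun pv => D pv.1 pv.2))].

Definition prevariety (K : numFieldType) (TF : taylor_family K)
    (T : Type) (s : sfstr K T) : Prop :=
  is_sfspace s /\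
  exists (I : Type) (Ui : I -> set T),
    [/\ countable [set: I], (forall i, sopen s (Ui i)), \bigcup_i Ui i = setT &
        forall i, exists (V : vectType K) (S : set V),
          locally_closed (TF V) S /\ sf_iso (induced s (Ui i)) (induced (TF V) S)].

Definition product_structure (K : numFieldType) (TF : taylor_family K)
    (T1 T2 : Type) (s1 : sfstr K T1) (s2 : sfstr K T2) (p : sfstr K (T1 * T2)) : Prop :=
  [/\ prevariety TF p,
      smooth p s1 fst, smooth p s2 snd &
      forall (T : Type) (s : sfstr K T) (psi1 : T -> T1) (psi2 : T -> T2),
        prevariety TF s -> smooth s s1 psi1 -> smooth s s2 psi2 ->
        smooth s p (fun x => (psi1 x, psi2 x))].

From mathcomp Require Import all_boot all_order all_algebra.
From mathcomp Require Import boolp classical_sets cardinality reals complex.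
Set Implicit Arguments. Unset Strict Implicit. Unset Printing Implicit Defensive.
Import GRing.Theory.
Local Open Scope classical_set_scope.

(* Equip M * N with the final structure for the pairs (a, b) of smooth maps from
   prevarieties into M and N: a set is open, and a function regular on it, when every
   such pair pulls it back to an open set and a regular function.  The projections
   are then smooth and the universal property holds by construction; what remains is
   that this is a prevariety, with charts U_i * V_j onto S_1 * S_2 in V (+) W.
   The crux is that on a prevariety a pair of maps smooth into V and into W is smooth
   into V (+) W.  Locally, through a chart onto a subset of some U, every coordinate
   of both maps is the pull-back of a regular function on an open subset of U; these
   assemble into a map from that open set to V (+) W whose composites with linear
   functionals are regular, hence smooth by Taylor axiom (3). *)

Lemma sig_valK T (P : T -> Prop) (x : {y : T | P y}) (h : P (proj1_sig x)) :
  exist P (proj1_sig x) h = x.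
Proof. by case: x h => y p h; exact: eq_exist. Qed.

Section SheafSpace.
Variables (K : numFieldType) (T : Type) (s : sfstr K T).
Hypothesis hs : is_sfspace s.

Lemma sopen_topology : is_topology (sopen s). Proof. by case: hs. Qed.

Lemma sopenT : sopen s setT. Proof. by case: sopen_topology. Qed.

Lemma sopen0 : sopen s set0. Proof. by case: sopen_topology. Qed.

Lemma sopenI A B : sopen s A -> sopen s B -> sopen s (A `&` B).
Proof. by case: sopen_topology => _ _ + _; apply. Qed.

Lemma sopen_bigcup (I : Type) (A : I -> set T) :
  (forall i, sopen s (A i)) -> sopen s (\bigcup_i A i).
Proof. by case: sopen_topology => _ _ _; apply. Qed.

Lemma sopenU A B : sopen s A -> sopen s B -> sopen s (A `|` B).
Proof.
move=> oA oB; have -> : A `|` B = \bigcup_(i : bool) (if i then A else B).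
  apply/seteqP; split=> x; first by case=> h; [exists true | exists false].
  by case=> -[] _; [left | right].
by apply: sopen_bigcup => -[].
Qed.

Lemma sopen_local U :
  (forall x, U x -> exists W, [/\ sopen s W, W x & W `<=` U]) -> sopen s U.
Proof.
move=> hU; have -> : U = \bigcup_(W : {W : set T | sopen s W /\ W `<=` U}) proj1_sig W.
  apply/seteqP; split=> [x Ux | x [[W [_ WU]] _ /= /WU] //].
  by have [W [oW Wx WU]] := hU x Ux; exists (exist _ W (conj oW WU)).
by apply: sopen_bigcup => -[W []].
Qed.

Lemma sfun_restr U W f : sopen s U -> sopen s W -> W `<=` U -> sfun s U f -> sfun s W f.
Proof. by case: hs => _ _ + _; apply. Qed.

Lemma sfun_local U f : sopen s U ->
  (forall x, U x -> exists W, [/\ sopen s W, W x, W `<=` U & sfun s W f]) -> sfun s U f.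
Proof.
case: hs => _ _ _ glue oU hU.
apply: (glue U {W : set T | [/\ sopen s W, W `<=` U & sfun s W f]} (@proj1_sig _ _)) => //.
- by case=> W [].
- apply/seteqP; split=> [x Ux | x [[W [_ WU _]] _ /= /WU] //].
  by have [W [oW Wx WU sW]] := hU x Ux; exists (exist _ W (And3 oW WU sW)).
- by case=> W [oW WU sW]; exists f.
Qed.

Lemma sfun_eq U f g : sopen s U -> (forall x, U x -> f x = g x) -> sfun s U f -> sfun s U g.
Proof.
case: hs => _ _ _ glue oU fg sf; apply: (glue U unit (fun _ => U)) => //.
  by apply/seteqP; split=> [x Ux|x []//]; exists tt.
by move=> _; exists f => // x /fg.
Qed.

Local Open Scope ring_scope.

Lemma sfun_cst U (c : K) : sopen s U -> sfun s U (fun _ => c).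
Proof. by case: hs => _ alg _ _ /alg[+ _ _ _]; apply. Qed.

Lemma sfunD U f g : sopen s U -> sfun s U f -> sfun s U g -> sfun s U (fun x => f x + g x).
Proof. by case: hs => _ alg _ _ /alg[_ + _ _]; apply. Qed.

Lemma sfunM U f g : sopen s U -> sfun s U f -> sfun s U g -> sfun s U (fun x => f x * g x).
Proof. by case: hs => _ alg _ _ /alg[_ _ + _]; apply. Qed.

Lemma sfunZ U (a : K) f : sopen s U -> sfun s U f -> sfun s U (fun x => a * f x).
Proof. by case: hs => _ alg _ _ /alg[_ _ _]; apply. Qed.

Lemma sfun_sum U n (F : 'I_n -> T -> K) : sopen s U -> (forall i, sfun s U (F i)) ->
  sfun s U (fun x => \sum_(i < n) F i x).
Proof.
move=> oU; elim: n F => [|n IH] F sF.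
  by under [fun x => _]funext do rewrite big_ord0; exact: sfun_cst.
under [fun x => _]funext do rewrite big_ord_recr /=.
by apply: sfunD => //; exact: (IH (fun i => F (widen_ord _ i))).
Qed.

End SheafSpace.

Section Induced.
Variables (K : numFieldType) (T : Type) (s : sfstr K T) (S : set T).
Local Notation val := (@proj1_sig T S).

Lemma sopen_induced B : sopen s B -> sopen (induced s S) (val @^-1` B).
Proof. by exists B. Qed.

Lemma sfun_induced B f : sopen s B -> sfun s B f ->
  sfun (induced s S) (val @^-1` B) (f \o val).
Proof.
move=> oB sB; split=> [|p Bp]; first exact: sopen_induced.
by exists (val @^-1` B), B, f; split=> //; exact: sopen_induced.
Qed.

Lemma smooth_val : smooth (induced s S) s val.
Proof. by split; [exact: sopen_induced | exact: sfun_induced]. Qed.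

Hypothesis hs : is_sfspace s.

Lemma induced_topology : is_topology (sopen (induced s S)).
Proof.
split.
- by rewrite -(preimage_setT val); apply/sopen_induced/sopenT.
- by rewrite -(preimage_set0 val); apply/sopen_induced/sopen0.
- by move=> _ _ [A oA ->] [B oB ->]; rewrite -preimage_setI; apply/sopen_induced/sopenI.
move=> I A oA.
pose J := {i : I & {B : set T | sopen s B /\ A i = val @^-1` B}}.
exists (\bigcup_(j : J) proj1_sig (projT2 j)).
  by apply: sopen_bigcup => // -[i [B []]].
apply/seteqP; split=> [x [i _ Aix]|x [[i [B [oB eB]]] _ /= Bx]]; last first.
  by exists i; rewrite ?eB.
have [B oB eB] := oA i; rewrite eB in Aix.
by exists (existT _ i (exist _ B (conj oB eB))).
Qed.

Lemma induced_sfun_op (op : K -> K -> K) :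
  (forall B g1 g2, sopen s B -> sfun s B g1 -> sfun s B g2 ->
     sfun s B (fun x => op (g1 x) (g2 x))) ->
  forall A f1 f2, sfun (induced s S) A f1 -> sfun (induced s S) A f2 ->
    sfun (induced s S) A (fun x => op (f1 x) (f2 x)).
Proof.
have [_ _ openI _] := induced_topology.
move=> sop A f1 f2 [oA sf1] [_ sf2]; split=> // p Ap.
have [W1 [B1 [g1 [oW1 W1p W1A [oB1 sg1] e1]]]] := sf1 p Ap.
have [W2 [B2 [g2 [oW2 W2p _ [oB2 sg2] e2]]]] := sf2 p Ap.
have oB12 := sopenI hs oB1 oB2.
exists (W1 `&` W2), (B1 `&` B2), (fun x => op (g1 x) (g2 x)); split=> //.
- exact: openI.
- by move=> z [/W1A].
- split=> //; apply: sop => //.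
    by apply: (sfun_restr hs oB1) => // z [].
  by apply: (sfun_restr hs oB2) => // z [].
by move=> z [/e1 [? ->] /e2 [? ->]].
Qed.

Lemma induced_sfspace : is_sfspace (induced s S).
Proof.
have [openT _ openI _] := induced_topology.
have sfun_cst_ind A (c : K) : sopen (induced s S) A -> sfun (induced s S) A (fun _ => c).
  move=> oA; split=> // p Ap; exists A, setT, (fun _ => c).
  by split=> //; split; [exact: sopenT | exact: (sfun_cst hs c (sopenT hs))].
split.
- exact: induced_topology.
- move=> A oA; split.
  + by move=> c; exact: sfun_cst_ind.
  + by apply: induced_sfun_op => *; exact: sfunD.
  + by apply: induced_sfun_op => *; exact: sfunM.
  by move=> a f; apply: induced_sfun_op (sfun_cst_ind A a oA) => *; exact: sfunM.
- move=> A W f _ oW WA [_ sf]; split=> // p Wp.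
  have [W1 [B1 [g1 [oW1 W1p _ sg1 e1]]]] := sf p (WA _ Wp).
  exists (W `&` W1), B1, g1.
  by split=> //; [exact: openI | move=> z [_ /e1]].
move=> A I Ai f oA _ eA hg; split=> // p Ap.
have [i _ Aip] : (\bigcup_i Ai i) p by rewrite -eA.
have [g [_ sg] fg] := hg i; have [W1 [B1 [g1 [oW1 W1p W1A sg1 e1]]]] := sg p Aip.
exists W1, B1, g1; split=> //; first by move=> z /W1A Aiz; rewrite eA; exists i.
by move=> z W1z; rewrite fg; [exact: e1 | exact: W1A].
Qed.

End Induced.

Section Smooth.
Variable K : numFieldType.
Implicit Types T X Y : Type.

Lemma smooth_id T (s : sfstr K T) : smooth s s id.
Proof. by split. Qed.

Lemma smooth_comp T X Y (s : sfstr K T) (sX : sfstr K X) (sY : sfstr K Y)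
    (f : T -> X) (g : X -> Y) :
  smooth s sX f -> smooth sX sY g -> smooth s sY (g \o f).
Proof.
move=> [fo ff] [go gf]; split=> [B oB|B h oB sh]; first exact: (fo _ (go B oB)).
by apply: (ff (g @^-1` B) (h \o g)); [exact: go | exact: gf].
Qed.

Lemma smooth_to_induced T X (s : sfstr K T) (sX : sfstr K X) (P : set X)
    (c : T -> {y : X | P y}) :
  is_sfspace s -> smooth s sX (fun x => proj1_sig (c x)) -> smooth s (induced sX P) c.
Proof.
move=> hs [co cf]; split=> [_ [B oB ->]|_ f [B oB ->] [_ hf]]; first exact: co.
apply: sfun_local => // [|x Bx]; first exact: co.
have [_ [Bg [g [[B' oB' ->] /= B'x WB [oBg sg] e]]]] := hf (c x) Bx.
pose vc x := proj1_sig (c x).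
have oB'g := sopenI hs (co _ oB') (co _ oBg).
exists (vc @^-1` B' `&` vc @^-1` Bg); split=> //.
- by split=> //; have [] := e (c x) B'x.
- by move=> z [/WB].
apply: (sfun_eq hs oB'g (f := g \o vc)).
  by move=> z [B'z _] /=; have [_ ->] := e (c z) B'z.
by apply: (sfun_restr hs (co _ oBg) oB'g) => [z []|]; last exact: cf.
Qed.

(* Smoothness of [c] on the open set [O], phrased with total maps rather than on the
   subtype [{x | O x}]; [induced_smooth_on] and [smooth_on_induced] relate the two. *)
Definition smooth_on T X (s : sfstr K T) (sX : sfstr K X) (O : set T) (c : T -> X) :=
  forall B, sopen sX B -> sopen s (O `&` c @^-1` B) /\
    forall f, sfun sX B f -> sfun s (O `&` c @^-1` B) (f \o c).

Lemma smooth_on_precomp T T' X (s : sfstr K T) (s' : sfstr K T') (sX : sfstr K X)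
    (a : T -> T') (O : set T') (c : T' -> X) :
  smooth s s' a -> smooth_on s' sX O c -> smooth_on s sX (a @^-1` O) (c \o a).
Proof.
move=> [ao af] hc B oB; have [o1 f1] := hc B oB.
by split=> [|f sf]; [exact: (ao _ o1) | exact: (af _ _ o1 (f1 f sf))].
Qed.

Lemma smooth_on_comp T X Y (s : sfstr K T) (sX : sfstr K X) (sY : sfstr K Y)
    (O : set T) (O' : set X) (c : T -> X) (d : X -> Y) :
  smooth_on s sX O c -> smooth_on sX sY O' d ->
  smooth_on s sY (O `&` c @^-1` O') (d \o c).
Proof.
move=> hc hd B oB; have [o1 f1] := hd B oB; have [o2 f2] := hc _ o1.
have -> : O `&` c @^-1` O' `&` (d \o c) @^-1` B = O `&` c @^-1` (O' `&` d @^-1` B).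
  by apply/seteqP; split=> [x [[? ?] ?] | x [? [? ?]]].
by split=> // f /f1 /f2.
Qed.

Lemma smooth_on_sub_eq T X (s : sfstr K T) (sX : sfstr K X) (O O' : set T)
    (c c' : T -> X) :
  is_sfspace s -> sopen s O' -> O' `<=` O -> (forall x, O' x -> c x = c' x) ->
  smooth_on s sX O c -> smooth_on s sX O' c'.
Proof.
move=> hs oO' O'O cc' hc B oB; have [o1 f1] := hc B oB.
have E : O' `&` c' @^-1` B = O' `&` (O `&` c @^-1` B).
  apply/seteqP; split=> x [O'x]; rewrite /= cc' //; last by case.
  by split=> //; split=> //; exact: O'O.
rewrite E; have oE := sopenI hs oO' o1; split=> // f sf.
apply: (sfun_eq hs oE (f := f \o c)); first by move=> x [O'x _]; rewrite /= cc'.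
by apply: (sfun_restr hs o1 oE) => [x []|]; last exact: f1.
Qed.

Lemma smooth_on_sub T X (s : sfstr K T) (sX : sfstr K X) (O O' : set T) (c : T -> X) :
  is_sfspace s -> sopen s O' -> O' `<=` O -> smooth_on s sX O c -> smooth_on s sX O' c.
Proof. by move=> hs oO' O'O; apply: smooth_on_sub_eq. Qed.

Lemma smooth_on_local T X (s : sfstr K T) (sX : sfstr K X) (O : set T) (c : T -> X) :
  is_sfspace s -> sopen s O ->
  (forall x, O x -> exists N, [/\ sopen s N, N x, N `<=` O & smooth_on s sX N c]) ->
  smooth_on s sX O c.
Proof.
move=> hs oO loc B oB.
have nbhd x : (O `&` c @^-1` B) x -> exists N, [/\ sopen s N, N x, N `<=` O `&` c @^-1` B &
    forall f, sfun sX B f -> sfun s N (f \o c)].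
  case=> Ox Bx; have [N [oN Nx NO hN]] := loc x Ox; have [o fN] := hN B oB.
  by exists (N `&` c @^-1` B); split=> // z [/NO].
split=> [|f sf]; first by apply: sopen_local => // x /nbhd [N []]; exists N.
apply: sfun_local => // [|x /nbhd [N [oN Nx NO /(_ f sf)]]]; last by exists N.
by apply: sopen_local => // x /nbhd [N []]; exists N.
Qed.

Lemma smooth_on_induced T X (s : sfstr K T) (sX : sfstr K X) (O : set T) (c : T -> X) :
  smooth_on s sX O c -> smooth (induced s O) sX (c \o @proj1_sig T O).
Proof.
move=> hc.
have E B : (c \o @proj1_sig T O) @^-1` B = @proj1_sig T O @^-1` (O `&` c @^-1` B).
  by apply/seteqP; split=> -[x Ox] //= [].
split=> [B oB|B f oB sf]; rewrite E; first exact/sopen_induced/(hc B oB).1.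
have [oE sE] := hc B oB; exact: (sfun_induced O oE (sE f sf)).
Qed.

Lemma induced_smooth_on T X (s : sfstr K T) (sX : sfstr K X) (O : set T) (c : T -> X) :
  is_sfspace s -> sopen s O -> smooth (induced s O) sX (c \o @proj1_sig T O) ->
  smooth_on s sX O c.
Proof.
move=> hs oO [co cf] B oB; have [C oC eC] := co B oB.
have E : O `&` c @^-1` B = O `&` C.
  apply/seteqP; split=> x [Ox Bx]; split=> //.
    by have : ((c \o @proj1_sig T O) @^-1` B) (exist _ x Ox) by []; rewrite eC.
  by have : (@proj1_sig T O @^-1` C) (exist _ x Ox) by []; rewrite -eC.
rewrite E; split=> [|f sf]; first exact: (sopenI hs oO oC).
have [_ hf] := cf B f oB sf; rewrite eC in hf.
apply: (sfun_local hs) => [|x [Ox Cx]]; first exact: (sopenI hs oO oC).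
have [_ [Bg [g [[C' oC' ->] /= C'x WC [oBg sg] e]]]] := hf (exist _ x Ox) Cx.
have oOC' := sopenI hs oO oC'.
exists (O `&` C'); split=> //.
  by move=> z [Oz C'z]; split=> //; exact: (WC (exist _ z Oz) C'z).
apply: (sfun_eq hs oOC' (f := g)); first by move=> z [Oz /(e (exist _ z Oz)) [_ /= ->]].
by apply: (sfun_restr hs oBg oOC') => // z [Oz /(e (exist _ z Oz)) []].
Qed.

Lemma smooth_on_setT T X (s : sfstr K T) (sX : sfstr K X) (c : T -> X) :
  smooth_on s sX setT c -> smooth s sX c.
Proof.
move=> hc; split=> [B oB|B f oB sf]; have [o1 f1] := hc B oB.
  by rewrite -[_ @^-1` _]setTI.
by rewrite -[_ @^-1` _]setTI; exact: f1.
Qed.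

Lemma induced_setT_iso T (s : sfstr K T) : is_sfspace s -> sf_iso (induced s setT) s.
Proof.
move=> hs; exists (@proj1_sig T setT), (fun x => exist _ x I); split=> //.
- exact: smooth_val.
- by apply: smooth_to_induced => //; exact: smooth_id.
by case=> x [].
Qed.

End Smooth.

Section LinearFunctionals.
Local Open Scope ring_scope.
Variable K : numFieldType.
Implicit Types V W : vectType K.

Lemma lin_functional0 V (phi : V -> K) : lin_functional phi -> phi 0 = 0.
Proof.
move=> lphi; have := lphi 1 0 0; rewrite scale1r addr0 mul1r => e.
by apply: (addrI (phi 0)); rewrite addr0 -e.
Qed.

Lemma lin_functionalD V (phi : V -> K) : lin_functional phi -> {morph phi : u v / u + v}.
Proof. by move=> lphi u v; have := lphi 1 u v; rewrite scale1r mul1r. Qed.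

Lemma lin_functionalZ V (phi : V -> K) a u : lin_functional phi -> phi (a *: u) = a * phi u.
Proof. by move=> lphi; rewrite -[a *: u]addr0 lphi (lin_functional0 lphi) addr0. Qed.

Lemma lin_functional_sum V (phi : V -> K) n (c : 'I_n -> K) (e : 'I_n -> V) :
  lin_functional phi -> phi (\sum_(i < n) c i *: e i) = \sum_(i < n) c i * phi (e i).
Proof.
move=> lphi; rewrite (big_morph phi (lin_functionalD lphi) (lin_functional0 lphi)).
by apply: eq_bigr => i _; exact: lin_functionalZ.
Qed.

Lemma lin_functional_coord V n (X : n.-tuple V) (i : 'I_n) : lin_functional (coord X i).
Proof. by move=> a u v; rewrite linearP. Qed.

Lemma lin_functional_pairE V W (phi : (V * W)%type -> K) v w :
  lin_functional phi -> phi (v, w) = phi (v, 0) + phi (0, w).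
Proof.
move=> lphi; rewrite -(lin_functionalD lphi); congr phi.
by apply/eqP; rewrite xpair_eqE /= addr0 add0r !eqxx.
Qed.

Lemma lin_functional_inl V W (phi : (V * W)%type -> K) :
  lin_functional phi -> lin_functional (fun v : V => phi (v, 0)).
Proof.
move=> lphi a u v; rewrite -lphi; congr phi.
by apply/eqP; rewrite xpair_eqE /= scaler0 addr0 !eqxx.
Qed.

Lemma lin_functional_inr V W (phi : (V * W)%type -> K) :
  lin_functional phi -> lin_functional (fun w : W => phi (0, w)).
Proof.
move=> lphi a u v; rewrite -lphi; congr phi.
by apply/eqP; rewrite xpair_eqE /= scaler0 addr0 !eqxx.
Qed.

End LinearFunctionals.

Section TaylorFamily.
Variables (K : numFieldType) (TF : taylor_family K).
Hypothesis HTF : is_taylor_family TF.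

Lemma taylor_sfspace (V : vectType K) : is_sfspace (TF V).
Proof. by case: (HTF V) => -[]. Qed.

Lemma sfun_lin_functional (V : vectType K) (phi : V -> K) :
  lin_functional phi -> sfun (TF V) setT phi.
Proof. by case: (HTF V) => _ [_ + _ _ _]; apply. Qed.

Lemma taylor_smooth_on (V W : vectType K) (B : set V) (G : V -> W) :
  sopen (TF V) B -> (forall phi : W -> K, lin_functional phi -> sfun (TF V) B (phi \o G)) ->
  smooth_on (TF V) (TF W) B G.
Proof.
move=> oB hG; apply: (induced_smooth_on (taylor_sfspace V) oB).
case: (HTF V) => _ [_ _ /(_ W B (G \o @proj1_sig V B) oB) [_ smoothG] _ _].
apply: smoothG => phi /hG sG.
have <- : @proj1_sig V B @^-1` B = setT by apply/seteqP; split=> // -[].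
exact: (sfun_induced _ oB sG).
Qed.

Lemma smooth_linear (X V : vectType K) (L : X -> V) :
  (forall phi : V -> K, lin_functional phi -> lin_functional (phi \o L)) ->
  smooth (TF X) (TF V) L.
Proof.
move=> hL; apply/smooth_on_setT/taylor_smooth_on; first exact/sopenT/taylor_sfspace.
by move=> phi /hL; exact: sfun_lin_functional.
Qed.

Lemma smooth_fst (V W : vectType K) : smooth (TF (V * W)%type) (TF V) fst.
Proof. by apply: smooth_linear => phi lphi a u v; exact: lphi. Qed.

Lemma smooth_snd (V W : vectType K) : smooth (TF (V * W)%type) (TF W) snd.
Proof. by apply: smooth_linear => phi lphi a u v; exact: lphi. Qed.

Lemma sfun_on_lin_functional T (s : sfstr K T) (V : vectType K) (O : set T) (a : T -> V)
    (phi : V -> K) :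
  smooth_on s (TF V) O a -> lin_functional phi -> sfun s O (phi \o a).
Proof.
move=> ha /sfun_lin_functional /((ha setT (sopenT (taylor_sfspace V))).2).
by rewrite preimage_setT setIT.
Qed.

Lemma smooth_on_pair_open (U V W : vectType K) (B : set U) (a : U -> V) (b : U -> W) :
  sopen (TF U) B -> smooth_on (TF U) (TF V) B a -> smooth_on (TF U) (TF W) B b ->
  smooth_on (TF U) (TF (V * W)%type) B (fun u => (a u, b u)).
Proof.
move=> oB ha hb; apply: taylor_smooth_on => // phi lphi.
have -> : phi \o (fun u => (a u, b u)) = (fun u => phi (a u, 0) + phi (0, b u))%R.
  by apply: funext => u; exact: lin_functional_pairE.
apply: (sfunD (taylor_sfspace U) oB).
  exact: (sfun_on_lin_functional ha (lin_functional_inl lphi)).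
exact: (sfun_on_lin_functional hb (lin_functional_inr lphi)).
Qed.

Lemma locally_closedX (V W : vectType K) (S1 : set V) (S2 : set W) :
  locally_closed (TF V) S1 -> locally_closed (TF W) S2 ->
  locally_closed (TF (V * W)%type) (S1 `*` S2).
Proof.
have hX := taylor_sfspace (V * W)%type.
have [fst_open _] := smooth_fst V W; have [snd_open _] := smooth_snd V W.
move=> [A1 [C1 [oA1 cC1 ->]]] [A2 [C2 [oA2 cC2 ->]]].
exists (fst @^-1` A1 `&` snd @^-1` A2), (fst @^-1` C1 `&` snd @^-1` C2); split.
- exact: (sopenI hX (fst_open _ oA1) (snd_open _ oA2)).
- rewrite /closed_in setCI; exact: (sopenU hX (fst_open _ cC1) (snd_open _ cC2)).
by apply/seteqP; split=> -[x y] [[? ?] [? ?]].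
Qed.

Lemma prevariety_locally_closed (V : vectType K) (S : set V) :
  locally_closed (TF V) S -> prevariety TF (induced (TF V) S).
Proof.
have hS := induced_sfspace S (taylor_sfspace V).
move=> lcS; split=> //; exists unit, (fun _ => setT); split.
- by apply: finite_set_countable; rewrite setT_unit; exact: finite_set1.
- by move=> _; exact: sopenT.
- by apply/seteqP; split=> // y _; exists tt.
by move=> _; exists V, S; split=> //; exact: induced_setT_iso.
Qed.

End TaylorFamily.

Section Chart.
Variables (K : numFieldType) (TF : taylor_family K).
Hypothesis HTF : is_taylor_family TF.
Variables (T : Type) (s : sfstr K T) (U : vectType K) (Tk : set T) (S : set U).
Variables (phi : {x : T | Tk x} -> {u : U | S u}) (chi : {u : U | S u} -> {x : T | Tk x}).
Hypotheses (hs : is_sfspace s) (oTk : sopen s Tk).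
Hypotheses (sphi : smooth (induced s Tk) (induced (TF U) S) phi)
  (schi : smooth (induced (TF U) S) (induced s Tk) chi) (phiK : cancel phi chi).

(* The chart [phi] as a total map into U, junk value 0 outside its domain [Tk]. *)
Definition chart_map (t : T) : U :=
  if pselect (Tk t) is left h then proj1_sig (phi (exist _ t h)) else 0%R.

Lemma chart_mapE t (h : Tk t) : chart_map t = proj1_sig (phi (exist _ t h)).
Proof. by rewrite /chart_map; case: pselect => // h'; rewrite (Prop_irrelevance h h'). Qed.

Lemma smooth_on_chart_map : smooth_on s (TF U) Tk chart_map.
Proof.
apply: induced_smooth_on => //.
have -> : chart_map \o @proj1_sig T Tk = @proj1_sig U S \o phi.
  by apply: funext => -[t h]; exact: chart_mapE.
exact: (smooth_comp sphi (smooth_val _ _)).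
Qed.

(* Transported to [S] through [chi], [h] is locally the restriction of some [g]
   regular on an open subset of U. *)
Lemma sfun_factor_chart O (h : T -> K) t : sopen s O -> sfun s O h -> O t -> Tk t ->
  exists B (g : U -> K) A, [/\ sopen (TF U) B /\ sfun (TF U) B g, sopen s A, A t,
    A `<=` O `&` Tk & forall t', A t' -> B (chart_map t') /\ h t' = g (chart_map t')].
Proof.
move=> oO sh Ot Tkt; have [po _] := sphi; have [_ cf] := schi.
have [_ sh'] := cf _ _ (sopen_induced Tk oO) (sfun_induced Tk oO sh).
have /sh' [_ [B [g [[B' oB' ->] B'phit WS [oB sg] e]]]] :
  (chi @^-1` (@proj1_sig T Tk @^-1` O)) (phi (exist _ t Tkt)) by rewrite /= phiK.
have [A0 oA0 eA0] := po _ (sopen_induced S oB').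
exists B, g, (O `&` Tk `&` A0); split=> //.
- exact: (sopenI hs (sopenI hs oO oTk) oA0).
- by split=> //; rewrite -[A0 t]/((@proj1_sig T Tk @^-1` A0) (exist _ t Tkt)) -eA0.
move=> t' [[_ Tkt'] A0t']; rewrite (chart_mapE Tkt').
have : (phi @^-1` (@proj1_sig U S @^-1` B')) (exist _ t' Tkt') by rewrite eA0.
by move=> /e []; rewrite /= phiK.
Qed.

Lemma sfuns_factor_chart (I : eqType) (r : seq I) (h : I -> T -> K) O t :
  sopen s O -> (forall i, sfun s O (h i)) -> O t -> Tk t ->
  exists B (g : I -> U -> K) A, [/\ sopen (TF U) B /\ (forall i, sfun (TF U) B (g i)),
    sopen s A, A t, A `<=` O `&` Tk &
    forall t', A t' -> B (chart_map t') /\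
      forall i, i \in r -> h i t' = g i (chart_map t')].
Proof.
have hU := taylor_sfspace HTF U; move=> oO sh Ot Tkt; elim: r => [|j r IH].
  exists setT, (fun _ _ => 0%R), (O `&` Tk); split=> //.
  - by split=> [|i /=]; [exact: sopenT | exact: (sfun_cst hU 0%R (sopenT hU))].
  exact: (sopenI hs oO oTk).
have [B1 [g1 [A1 [[oB1 sg1] oA1 A1t A1O e1]]]] := IH.
have [B2 [g2 [A2 [[oB2 sg2] oA2 A2t A2O e2]]]] := sfun_factor_chart oO (sh j) Ot Tkt.
have oB := sopenI hU oB1 oB2.
exists (B1 `&` B2), (fun i => if i == j then g2 else g1 i), (A1 `&` A2); split.
- split=> // i; case: (i == j).
    by apply: (sfun_restr hU oB2 oB) => // z [].
  by apply: (sfun_restr hU oB1 oB) => // z [].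
- exact: (sopenI hs oA1 oA2).
- by split.
- by move=> z [/A1O].
move=> t' [/e1 [B1t' {}e1] /e2 [B2t' {}e2]]; split=> // i.
by rewrite in_cons; case: eqP => [-> _|_ /e1 //]; exact: e2.
Qed.

Lemma smooth_on_factor_chart (V : vectType K) (O : set T) (a : T -> V) t :
  sopen s O -> smooth_on s (TF V) O a -> O t -> Tk t ->
  exists B (G : U -> V) A, [/\ sopen (TF U) B /\ smooth_on (TF U) (TF V) B G, sopen s A,
    A t, A `<=` O `&` Tk & forall t', A t' -> B (chart_map t') /\ a t' = G (chart_map t')].
Proof.
have hU := taylor_sfspace HTF U; move=> oO ha Ot Tkt.
pose e := vbasis (fullv : {vspace V}).
have sh (i : 'I_(\dim (fullv : {vspace V}))) : sfun s O (coord e i \o a).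
  exact: (sfun_on_lin_functional HTF ha (lin_functional_coord e i)).
have [B [g [A [[oB sg] oA At AO eg]]]] := sfuns_factor_chart (enum 'I__) oO sh Ot Tkt.
exists B, (fun u => \sum_i g i u *: e`_i)%R, A; split=> //.
  split=> //; apply: taylor_smooth_on => // psi lpsi.
  have -> : psi \o (fun u => \sum_i g i u *: e`_i)%R = (fun u => \sum_i g i u * psi e`_i)%R.
    by apply: funext => u; exact: lin_functional_sum.
  by apply: (sfun_sum hU oB) => i; apply: (sfunM hU oB) => //; exact: sfun_cst.
move=> t' /eg [Bt' et']; split=> //; rewrite [LHS](coord_vbasis (memvf (a t'))).
by apply: eq_bigr => i _; rewrite -et' // mem_enum.
Qed.

Lemma smooth_on_pair_chart (V W : vectType K) (O : set T) (a : T -> V) (b : T -> W) t :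
  sopen s O -> smooth_on s (TF V) O a -> smooth_on s (TF W) O b -> O t -> Tk t ->
  exists N, [/\ sopen s N, N t, N `<=` O &
    smooth_on s (TF (V * W)%type) N (fun x => (a x, b x))].
Proof.
have hU := taylor_sfspace HTF U; move=> oO ha hb Ot Tkt.
have [Ba [Ga [Aa [[oBa sGa] oAa Aat AaO ea]]]] := smooth_on_factor_chart oO ha Ot Tkt.
have [Bb [Gb [Ab [[oBb sGb] oAb Abt AbO eb]]]] := smooth_on_factor_chart oO hb Ot Tkt.
have oB := sopenI hU oBa oBb.
have sG : smooth_on (TF U) (TF (V * W)%type) (Ba `&` Bb) (fun u => (Ga u, Gb u)).
  apply: smooth_on_pair_open => //.
    by apply: (smooth_on_sub hU oB _ sGa) => z [].
  by apply: (smooth_on_sub hU oB _ sGb) => z [].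
have oA := sopenI hs oAa oAb.
exists (Aa `&` Ab); split=> //; first by move=> z [/AaO []].
apply: (smooth_on_sub_eq hs oA _ _ (smooth_on_comp smooth_on_chart_map sG)).
  move=> z [/[dup] /AaO [_ Tkz] /ea [Baz _] /eb [Bbz _]]; by split.
by move=> z [/ea [_ ->] /eb [_ ->]].
Qed.

End Chart.

Section Product.
Variables (K : numFieldType) (TF : taylor_family K).
Hypothesis HTF : is_taylor_family TF.

Lemma smooth_on_pair T (s : sfstr K T) (V W : vectType K) (O : set T) (a : T -> V)
    (b : T -> W) :
  prevariety TF s -> sopen s O -> smooth_on s (TF V) O a -> smooth_on s (TF W) O b ->
  smooth_on s (TF (V * W)%type) O (fun x => (a x, b x)).
Proof.
move=> [hs [I [Ui [_ oUi cover charts]]]] oO ha hb.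
apply: (smooth_on_local hs oO) => x Ox.
have [i _ Uix] : (\bigcup_i Ui i) x by rewrite cover.
have [U [S [_ [phi [chi [sphi schi phiK _]]]]]] := charts i.
exact: (smooth_on_pair_chart HTF hs (oUi i) sphi schi phiK oO ha hb Ox Uix).
Qed.

Variables (M N : Type) (sM : sfstr K M) (sN : sfstr K N).

Definition prod_sfstr : sfstr K (M * N) := @SFStr K (M * N)
  (fun A => forall T (s : sfstr K T) (a : T -> M) (b : T -> N),
     prevariety TF s -> smooth s sM a -> smooth s sN b ->
     sopen s ((fun x => (a x, b x)) @^-1` A))
  (fun A f => forall T (s : sfstr K T) (a : T -> M) (b : T -> N),
     prevariety TF s -> smooth s sM a -> smooth s sN b ->
     sopen s ((fun x => (a x, b x)) @^-1` A) /\
     sfun s ((fun x => (a x, b x)) @^-1` A) (f \o (fun x => (a x, b x)))).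

Lemma prod_sfspace : is_sfspace prod_sfstr.
Proof.
split.
- split.
  + by move=> T s a b [hs _] _ _; rewrite preimage_setT; exact: sopenT.
  + by move=> T s a b [hs _] _ _; rewrite preimage_set0; exact: sopen0.
  + move=> A B oA oB T s a b hp ha hb; rewrite preimage_setI.
    exact: (sopenI hp.1 (oA _ _ _ _ hp ha hb) (oB _ _ _ _ hp ha hb)).
  + move=> I A oA T s a b hp ha hb; rewrite preimage_bigcup.
    by apply: (sopen_bigcup hp.1) => i; exact: oA.
- move=> U oU; split.
  + move=> c T s a b hp ha hb; have oP := oU _ _ _ _ hp ha hb.
    by split=> //; exact: (sfun_cst hp.1 c oP).
  + move=> f g sf sg T s a b hp ha hb.
    have [oP sf'] := sf _ _ _ _ hp ha hb; have [_ sg'] := sg _ _ _ _ hp ha hb.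
    by split=> //; exact: (sfunD hp.1 oP sf' sg').
  + move=> f g sf sg T s a b hp ha hb.
    have [oP sf'] := sf _ _ _ _ hp ha hb; have [_ sg'] := sg _ _ _ _ hp ha hb.
    by split=> //; exact: (sfunM hp.1 oP sf' sg').
  + move=> c f sf T s a b hp ha hb; have [oP sf'] := sf _ _ _ _ hp ha hb.
    by split=> //; exact: (sfunZ hp.1 c oP sf').
- move=> U W f _ oW WU sf T s a b hp ha hb.
  have [oP sf'] := sf _ _ _ _ hp ha hb; have oQ := oW _ _ _ _ hp ha hb.
  by split=> //; apply: (sfun_restr hp.1 oP oQ) => // x /WU.
move=> U I Ui f oU oUi eU hg T s a b hp ha hb; split; first exact: oU.
have [[_ _ _ glue] _] := hp.
apply: (glue _ I (fun i => (fun x => (a x, b x)) @^-1` Ui i)).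
- exact: oU.
- by move=> i; exact: oUi.
- by rewrite eU preimage_bigcup.
move=> i; have [g sg fg] := hg i; exists (g \o (fun x => (a x, b x))).
  exact: (sg _ _ _ _ hp ha hb).2.
by move=> x /fg.
Qed.

Lemma prod_smooth_fst : smooth prod_sfstr sM fst.
Proof.
split=> [B oB T s a b _ ha _|B f oB sf T s a b _ ha _]; first exact: (ha.1 B oB).
by split; [exact: (ha.1 B oB) | exact: (ha.2 B f oB sf)].
Qed.

Lemma prod_smooth_snd : smooth prod_sfstr sN snd.
Proof.
split=> [B oB T s a b _ _ hb|B f oB sf T s a b _ _ hb]; first exact: (hb.1 B oB).
by split; [exact: (hb.1 B oB) | exact: (hb.2 B f oB sf)].
Qed.

Lemma prod_smooth_pair T (s : sfstr K T) (a : T -> M) (b : T -> N) :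
  prevariety TF s -> smooth s sM a -> smooth s sN b ->
  smooth s prod_sfstr (fun x => (a x, b x)).
Proof.
move=> hp ha hb; split=> [A oA|A f _ sf]; first exact: oA.
exact: (sf _ _ _ _ hp ha hb).2.
Qed.

Lemma prod_smooth_on (V W : vectType K) (O1 : set M) (O2 : set N) (c1 : M -> V)
    (c2 : N -> W) :
  sopen sM O1 -> sopen sN O2 -> smooth_on sM (TF V) O1 c1 -> smooth_on sN (TF W) O2 c2 ->
  smooth_on prod_sfstr (TF (V * W)%type) (O1 `*` O2) (fun z => (c1 z.1, c2 z.2)).
Proof.
move=> oO1 oO2 h1 h2 B oB.
have pullback T (s : sfstr K T) a b : prevariety TF s -> smooth s sM a -> smooth s sN b ->
    smooth_on s (TF (V * W)%type) (a @^-1` O1 `&` b @^-1` O2)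
      (fun x => (c1 (a x), c2 (b x))).
  move=> hp ha hb; have hs := hp.1.
  have oO := sopenI hs (ha.1 _ oO1) (hb.1 _ oO2).
  apply: (smooth_on_pair hp oO).
    by apply: (smooth_on_sub hs oO _ (smooth_on_precomp ha h1)) => x [].
  by apply: (smooth_on_sub hs oO _ (smooth_on_precomp hb h2)) => x [].
split=> [T s a b hp ha hb|f sf T s a b hp ha hb].
  exact: (pullback _ _ _ _ hp ha hb B oB).1.
by have [o1 f1] := pullback _ _ _ _ hp ha hb B oB; split=> //; exact: f1.
Qed.

Lemma prod_chart_iso (O1 : set M) (O2 : set N) (V W : vectType K) (S1 : set V)
    (S2 : set W) :
  is_sfspace sM -> is_sfspace sN -> sopen sM O1 -> sopen sN O2 ->
  locally_closed (TF V) S1 -> locally_closed (TF W) S2 ->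
  sf_iso (induced sM O1) (induced (TF V) S1) ->
  sf_iso (induced sN O2) (induced (TF W) S2) ->
  sf_iso (induced prod_sfstr (O1 `*` O2)) (induced (TF (V * W)%type) (S1 `*` S2)).
Proof.
move=> hM hN oO1 oO2 lc1 lc2 [phi1 [chi1 [sphi1 schi1 phi1K chi1K]]]
  [phi2 [chi2 [sphi2 schi2 phi2K chi2K]]].
have hVW := taylor_sfspace HTF (V * W)%type.
have hS := induced_sfspace (S1 `*` S2) hVW.
pose psi (z : {z | (O1 `*` O2) z}) : {y | (S1 `*` S2) y} :=
  exist _ (proj1_sig (phi1 (exist _ (proj1_sig z).1 (proj1 (proj2_sig z)))),
           proj1_sig (phi2 (exist _ (proj1_sig z).2 (proj2 (proj2_sig z)))))
        (conj (proj2_sig (phi1 _)) (proj2_sig (phi2 _))).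
pose chi (y : {y | (S1 `*` S2) y}) : {z | (O1 `*` O2) z} :=
  exist _ (proj1_sig (chi1 (exist _ (proj1_sig y).1 (proj1 (proj2_sig y)))),
           proj1_sig (chi2 (exist _ (proj1_sig y).2 (proj2 (proj2_sig y)))))
        (conj (proj2_sig (chi1 _)) (proj2_sig (chi2 _))).
pose r1 (y : {y | (S1 `*` S2) y}) : {v | S1 v} :=
  exist _ (proj1_sig y).1 (proj1 (proj2_sig y)).
pose r2 (y : {y | (S1 `*` S2) y}) : {w | S2 w} :=
  exist _ (proj1_sig y).2 (proj2 (proj2_sig y)).
have sr1 : smooth (induced (TF (V * W)%type) (S1 `*` S2)) (induced (TF V) S1) r1.
  exact: (smooth_to_induced (c := r1) hS
    (smooth_comp (smooth_val _ _) (smooth_fst HTF V W))).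
have sr2 : smooth (induced (TF (V * W)%type) (S1 `*` S2)) (induced (TF W) S2) r2.
  exact: (smooth_to_induced (c := r2) hS
    (smooth_comp (smooth_val _ _) (smooth_snd HTF V W))).
exists psi, chi; split.
- apply: (smooth_to_induced (induced_sfspace _ prod_sfspace)).
  have -> : (fun z => proj1_sig (psi z)) =
      (fun z => (chart_map phi1 z.1, chart_map phi2 z.2)) \o @proj1_sig _ (O1 `*` O2).
    apply: funext => -[[m n] hmn] /=.
    by rewrite (chart_mapE phi1 (proj1 hmn)) (chart_mapE phi2 (proj2 hmn)).
  apply/smooth_on_induced/prod_smooth_on => //.
    exact: (smooth_on_chart_map hM oO1 sphi1).
  exact: (smooth_on_chart_map hN oO2 sphi2).
- apply: (smooth_to_induced hS); apply: prod_smooth_pair.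
  + exact/prevariety_locally_closed/locally_closedX.
  + exact: (smooth_comp (smooth_comp sr1 schi1) (smooth_val _ _)).
  + exact: (smooth_comp (smooth_comp sr2 schi2) (smooth_val _ _)).
- move=> [[m n] [hm hn]]; apply: eq_exist => /=.
  by rewrite !sig_valK phi1K phi2K.
move=> [[v w] [hv hw]]; apply: eq_exist => /=.
by rewrite !sig_valK chi1K chi2K.
Qed.

Lemma prod_prevariety : prevariety TF sM -> prevariety TF sN -> prevariety TF prod_sfstr.
Proof.
move=> [hM [I [Ui [cI oUi cU chM]]]] [hN [J [Vj [cJ oVj cV chN]]]].
split; first exact: prod_sfspace.
exists (I * J)%type, (fun k => Ui k.1 `*` Vj k.2); split.
- by rewrite -setXTT; exact: countableX.
- by move=> k T s a b hp ha hb; exact: (sopenI hp.1 (ha.1 _ (oUi k.1)) (hb.1 _ (oVj k.2))).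
- apply/seteqP; split=> // -[m n] _.
  have [i _ hi] : (\bigcup_i Ui i) m by rewrite cU.
  have [j _ hj] : (\bigcup_j Vj j) n by rewrite cV.
  by exists (i, j).
move=> [i j]; have [V [S1 [lc1 iso1]]] := chM i; have [W [S2 [lc2 iso2]]] := chN j.
exists (V * W)%type, (S1 `*` S2); split; first exact: locally_closedX.
exact: prod_chart_iso.
Qed.

End Product.

Theorem lemma3p6p13 (R : realType) (b : bool)
  (TF : taylor_family (Kfield R b)) (HTF : is_taylor_family TF)
  (M N : Type) (sM : sfstr (Kfield R b) M) (sN : sfstr (Kfield R b) N) :
  prevariety TF sM -> prevariety TF sN ->
  exists p : sfstr (Kfield R b) (M * N), product_structure TF sM sN p.
Proof.
move=> hM hN; exists (prod_sfstr TF sM sN); split.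
- exact: prod_prevariety.
- exact: prod_smooth_fst.
- exact: prod_smooth_snd.
- exact: prod_smooth_pair.
Qed.
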